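(* Let $G$ be a connected nonbipartite graph with vertex set $\{u_1,\dots,u_m\}$ and $\kappa(G)=\delta(G)>0$, and let $n\ge3$. Let $S\subseteq V(G\times K_n)$ satisfy: (1) $|S|=(n-1)\delta(G)$; (2) $S_i\setminus S\neq\varnothing$ for every $i=1,\dots,m$; (3) $G\times K_n-S$ has no isolated vertex. Then $G\times K_n-S$ is connected.
   Context: The Kronecker product $G_1\times G_2$ has vertex set $V(G_1)\times V(G_2)$, with $(u_1,v_1)(u_2,v_2)$ an edge iff $u_1u_2\in E(G_1)$ and $v_1v_2\in E(G_2)$. Write $V(K_n)=\{v_1,\dots,v_n\}$ and $S_i=\{u_i\}\times V(K_n)$ for $i=1,\dots,m$. *)

From mathcomp Require Import all_boot.
Set Implicit Arguments. Unset Strict Implicit. Unset Printing Implicit Defensive.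

Section Graphs.
Variable T : finType.
Variable e : rel T.

Definition simple_graph : Prop := symmetric e /\ irreflexive e.

Definition induced (A : {set T}) : rel T :=
  fun x y => [&& x \in A, y \in A & e x y].

(* induced subgraph on A is connected (vacuously true when A is empty) *)
Definition connectedb (A : {set T}) : bool :=
  [forall x in A, forall y in A, connect (induced A) x y].

Definition graph_connected : bool := connectedb setT.

Definition bipartite : Prop :=
  exists A : {set T}, forall x y, e x y -> (x \in A) != (y \in A).

Definition deg (x : T) : nat := #|[set y | e x y]|.

(* minimum degree delta(G) (degrees are < #|T|, so #|T| is a neutral top) *)
Definition min_degree : nat := \big[minn/#|T|]_(x : T) deg x.

(* X is a vertex cut in the standard sense for kappa: G - X is disconnected
   or has at most one vertex *)
Definition sep_set (X : {set T}) : bool :=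
  ~~ connectedb (~: X) || (#|~: X| <= 1).

Definition vertex_connectivity : nat :=
  \big[minn/#|T|]_(X : {set T} | sep_set X) #|X|.
End Graphs.

Definition kron_Kn (T : finType) (e : rel T) (n : nat) : rel (T * 'I_n) :=
  fun x y => e x.1 y.1 && (x.2 != y.2).

Definition fibre (T : finType) (n : nat) (u : T) : {set T * 'I_n} :=
  [set x | x.1 == u].

From mathcomp Require Import all_boot zify.
Set Implicit Arguments. Unset Strict Implicit. Unset Printing Implicit Defensive.

(* Suppose G x K_n - S is disconnected and split its vertices into a
   component C and the rest D. Since (u,i) ~ (v,j) whenever uv is an edge and
   i <> j, a C-vertex over u and a D-vertex over a neighbour v of u carry the
   same label; so a fibre adjacent to a fibre meeting D has at most one
   C-vertex. If some fibre had two C-vertices, the fibres avoiding D with at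
   most one C-vertex would separate G, hence number at least kappa = delta,
   each containing n-1 vertices of S; a fibre on the boundary of the fibres
   meeting D contributes one more vertex of S, which is one too many.
   By symmetry every fibre meets C and D at most once, so it meets S in n-2
   vertices if it is mixed (meets both) and in n-1 otherwise. If all fibres
   are mixed, comparing the two labels of each fibre 2-colours G. Otherwise
   the neighbours of a mixed fibre with labels (a,b) are mixed fibres with
   labels (b,a) or non-mixed ones, whence delta <= #non-mixed or
   2 delta <= |V(G)|, and either way |S| > (n-1) delta. *)

Section FibreCard.
Variables (T : finType) (n : nat).
Implicit Types (A B : {set T * 'I_n}) (X : {set T}) (u : T).

Definition fibre_card A u : nat := #|[set i | (u, i) \in A]|.

Lemma card_fibre_card_sum A : #|A| = \sum_u fibre_card A u.
Proof.
have fibre_sum u : fibre_card A u = \sum_i ((u, i) \in A : nat).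
  rewrite /fibre_card -sum1_card big_mkcond /=.
  by apply: eq_bigr => i _; rewrite inE; case: ((u, i) \in A).
rewrite (eq_bigr _ (fun u _ => fibre_sum u)) pair_big /= -sum1_card big_mkcond /=.
by apply: eq_bigr => -[u i] _; case: ((u, i) \in A).
Qed.

Lemma sum_fibre_card_le A X : \sum_(u in X) fibre_card A u <= #|A|.
Proof. by rewrite card_fibre_card_sum [in X in _ <= X](bigID (mem X)) /= leq_addr. Qed.

Lemma fibre_card_gt0P A u : reflect (exists i, (u, i) \in A) (0 < fibre_card A u).
Proof.
by apply: (iffP card_gt0P) => -[i Ai]; exists i; rewrite inE in Ai *.
Qed.

Lemma fibre_card_le1 A u i : (forall j, (u, j) \in A -> j = i) -> fibre_card A u <= 1.
Proof.
move=> Ai; rewrite -(cards1 i) subset_leq_card //.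
by apply/subsetP => j; rewrite !inE => /Ai ->.
Qed.

Lemma fibre_card_le1_eq A u i j :
  fibre_card A u <= 1 -> (u, i) \in A -> (u, j) \in A -> i = j.
Proof. by move=> /card_le1_eqP A1 Ai Aj; apply: A1; rewrite inE. Qed.

Lemma fibre_cardC A u : fibre_card A u + fibre_card (~: A) u = n.
Proof.
rewrite /fibre_card; have -> : [set i | (u, i) \in ~: A] = ~: [set i | (u, i) \in A].
  by apply/setP => i; rewrite !inE.
by rewrite cardsC card_ord.
Qed.

Lemma fibre_cardU A B u :
  [disjoint A & B] -> fibre_card (A :|: B) u = fibre_card A u + fibre_card B u.
Proof.
move=> dAB; rewrite /fibre_card -cardsUI.
have -> : [set i | (u, i) \in A] :&: [set i | (u, i) \in B] = set0.
  by apply/setP => i; rewrite !inE; case Ai: (_ \in A); rewrite // (disjointFr dAB Ai).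
by rewrite cards0 addn0; apply: eq_card => i; rewrite !inE.
Qed.

End FibreCard.

Lemma bigmin_le (I : finType) (P : pred I) (F : I -> nat) top j :
  P j -> \big[minn/top]_(i | P i) F i <= F j.
Proof.
move=> Pj; have : j \in index_enum I by rewrite mem_index_enum.
elim: (index_enum I) => [|a r IHr] //=; rewrite big_cons inE.
case/orP=> [/eqP <-|/IHr le_r]; first by rewrite Pj geq_minl.
by case: (P a) => //; apply: leq_trans (geq_minr _ _) le_r.
Qed.

Lemma connect_forward_closed (T : finType) (r : rel T) (Z : {pred T}) x y :
  (forall a b, a \in Z -> r a b -> b \in Z) -> connect r x y -> x \in Z -> y \in Z.
Proof.
move=> closedZ /connectP[p + ->]; elim: p x => [|a p IHp] x //= /andP[rxa ra] Zx.
exact: IHp ra (closedZ _ _ Zx rxa).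
Qed.

Lemma disconnected_split (V : finType) (r : rel V) (A : {set V}) :
  ~~ connectedb r A ->
  exists C D : {set V}, [/\ C :|: D = A, [disjoint C & D], exists x, x \in C,
    exists y, y \in D & forall x y, x \in C -> y \in D -> ~~ r x y].
Proof.
case/forall_inPn => x0 Ax0 /forall_inPn[y0 Ay0 not_x0y0].
pose comp := [set z | connect (induced r A) x0 z].
exists (A :&: comp), (A :\: comp); split; first exact: setID.
- by rewrite disjoints_subset; apply/subsetP => z; rewrite !inE => /andP[_ ->].
- by exists x0; rewrite !inE Ax0 connect0.
- by exists y0; rewrite !inE Ay0 not_x0y0.
move=> x y; rewrite !inE => /andP[Ax x0x] /andP[/negP y_comp Ay]; apply/negP => rxy.
by apply: y_comp; apply: connect_trans x0x (connect1 _); rewrite /induced Ax Ay rxy.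
Qed.

Section GraphFacts.
Variables (T : finType) (e : rel T).

Lemma min_degree_le x : min_degree e <= deg e x.
Proof. exact: (bigmin_le (P := xpredT)). Qed.

Lemma min_degree_le_card (A : {set T}) x :
  (forall y, e x y -> y \in A) -> min_degree e <= #|A|.
Proof.
move=> nbhdA; apply: leq_trans (min_degree_le x) (subset_leq_card _).
by apply/subsetP => y; rewrite inE => /nbhdA.
Qed.

Lemma min_degree_lt_card (x : T) : irreflexive e -> min_degree e < #|T|.
Proof.
move=> e_irr; apply: leq_ltn_trans (min_degree_le x) _; rewrite -cardsT proper_card //.
by apply/properP; split; [exact: subsetT | exists x; rewrite ?inE ?e_irr].
Qed.

Lemma kron_Kn_sym n : symmetric e -> symmetric (kron_Kn e (n:=n)).
Proof. by move=> e_sym x y; rewrite /kron_Kn e_sym eq_sym. Qed.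

Lemma vertex_connectivity_le (X : {set T}) : sep_set e X -> vertex_connectivity e <= #|X|.
Proof. exact: bigmin_le. Qed.

Lemma connected_boundary_edge (Z : {set T}) x y :
  graph_connected e -> x \in Z -> y \notin Z -> exists w z, [/\ w \in Z, z \notin Z & e w z].
Proof.
move=> conn_e Zx /negPf Zy.
case: (pickP [pred wz : T * T | [&& wz.1 \in Z, wz.2 \notin Z & e wz.1 wz.2]]).
  by move=> [w z] /and3P[Zw Zz ewz]; exists w, z.
move=> no_exit; have closedZ a b : a \in Z -> induced e setT a b -> b \in Z.
  move=> Za /and3P[_ _ eab]; apply/negPn/negP => Zb.
  by have := no_exit (a, b); rewrite /= Za Zb eab.
move/forall_inP: conn_e => /(_ x (in_setT _)) /forall_inP /(_ y (in_setT _)) cxy.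
by rewrite (connect_forward_closed closedZ cxy Zx) in Zy.
Qed.
End GraphFacts.

Section Cut.
Variables (T : finType) (e : rel T) (n : nat) (S C D : {set T * 'I_n}).
Hypothesis e_sym : symmetric e.
Hypothesis CD_cover : C :|: D = ~: S.
Hypothesis CD_disjoint : [disjoint C & D].
Hypothesis no_CD_edge : forall x y, x \in C -> y \in D -> ~~ kron_Kn e x y.

Lemma notin_S_CD x : x \notin S -> (x \in C) || (x \in D).
Proof. by rewrite -in_setC -CD_cover inE. Qed.

Lemma D_notin_S x : x \in D -> x \notin S.
Proof. by move=> Dx; rewrite -in_setC -CD_cover inE Dx orbT. Qed.

Lemma C_notin_D x : x \in C -> x \notin D.
Proof. by move=> Cx; rewrite (disjointFr CD_disjoint Cx). Qed.

Lemma cut_edge_label u v i j : e u v -> (u, i) \in C -> (v, j) \in D -> i = j.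
Proof.
move=> euv Ci Dj; apply/eqP; apply: contraNT (no_CD_edge Ci Dj) => ij.
by rewrite /kron_Kn /= euv.
Qed.

Lemma fibre_card_SCD u : fibre_card S u + (fibre_card C u + fibre_card D u) = n.
Proof. by rewrite -fibre_cardU // CD_cover fibre_cardC. Qed.

Lemma fibre_card_C_le1_of_adj_D u v j : e u v -> (v, j) \in D -> fibre_card C u <= 1.
Proof. by move=> euv Dj; apply: (fibre_card_le1 (i := j)) => i Ci; apply: cut_edge_label Ci Dj. Qed.

Hypothesis no_isolated : forall x, x \notin S -> exists2 y, y \notin S & kron_Kn e x y.

Lemma fibre_card_C_le1_of_D u j : (u, j) \in D -> fibre_card C u <= 1.
Proof.
move=> Dj; have [[v k] Svk ejk] := no_isolated (D_notin_S Dj).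
have Dvk : (v, k) \in D.
  have /orP[Cvk|//] := notin_S_CD Svk.
  by move: (no_CD_edge Cvk Dj) ejk; rewrite kron_Kn_sym // => /negPf ->.
by case/andP: ejk => /= euv _; apply: fibre_card_C_le1_of_adj_D euv Dvk.
Qed.

Hypothesis fibre_not_in_S : forall u, exists i, (u, i) \notin S.

Lemma fibre_card_CD_gt0 u : 0 < fibre_card C u + fibre_card D u.
Proof.
have [i /notin_S_CD/orP[Ci|Di]] := fibre_not_in_S u.
  by rewrite ltn_addr //; apply/fibre_card_gt0P; exists i.
by rewrite ltn_addl //; apply/fibre_card_gt0P; exists i.
Qed.

Definition thin : {set T} := [set u | (fibre_card D u == 0) && (fibre_card C u <= 1)].

Lemma sep_set_thin u y : 1 < fibre_card C u -> 0 < fibre_card D y -> sep_set e thin.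
Proof.
move=> C2u D1y; apply/orP; left; apply/negP => /forall_inP conn_thin.
pose thick := [set v | (fibre_card D v == 0) && (1 < fibre_card C v)].
have closed_thick a b : a \in thick -> induced e (~: thin) a b -> b \in thick.
  rewrite !inE => /andP[_ C2a] /and3P[_ thin_b eab].
  have D0b : fibre_card D b == 0.
    rewrite -leqn0 leqNgt; apply/negP => /fibre_card_gt0P[j Dj].
    by move: (fibre_card_C_le1_of_adj_D eab Dj); rewrite leqNgt C2a.
  by move: thin_b; rewrite !inE D0b /= -ltnNge.
have D0u : fibre_card D u == 0.
  rewrite -leqn0 leqNgt; apply/negP => /fibre_card_gt0P[j /fibre_card_C_le1_of_D].
  by rewrite leqNgt C2u.
have thin_u : u \in ~: thin by rewrite !inE D0u /= -ltnNge.
have thin_y : y \in ~: thin by rewrite !inE (negPf (lt0n_neq0 D1y)).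
have /forall_inP/(_ y thin_y) cuy := conn_thin u thin_u.
have := connect_forward_closed closed_thick cuy.
by rewrite !inE D0u C2u (negPf (lt0n_neq0 D1y)) => /(_ isT).
Qed.

Lemma fibre_card_S_gt0_boundary w z :
  2 < n -> fibre_card D w = 0 -> e w z -> 0 < fibre_card D z -> 0 < fibre_card S z.
Proof.
move=> n_gt2 D0w ewz /fibre_card_gt0P[j Dj].
have /fibre_card_gt0P[i Ci] : 0 < fibre_card C w by move: (fibre_card_CD_gt0 w); rewrite D0w addn0.
have D1z : fibre_card D z <= 1.
  by apply: (fibre_card_le1 (i := i)) => k Dk; rewrite (cut_edge_label ewz Ci Dk).
have := fibre_card_SCD z; have := fibre_card_C_le1_of_D Dj; lia.
Qed.

Section BigFibre.
Hypothesis conn_e : graph_connected e.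
Hypothesis kappa_eq : vertex_connectivity e = min_degree e.
Hypothesis n_gt2 : 2 < n.
Hypothesis card_S : #|S| = (n - 1) * min_degree e.
Hypothesis D_nonempty : exists y, y \in D.

Lemma fibre_card_C_le1 u : fibre_card C u <= 1.
Proof.
rewrite leqNgt; apply/negP => C2u; have [[y j] Dyj] := D_nonempty.
have D1y : 0 < fibre_card D y by apply/fibre_card_gt0P; exists j.
have thin_ge : min_degree e <= #|thin|.
  by rewrite -kappa_eq vertex_connectivity_le // (sep_set_thin C2u D1y).
have D0u : u \in [set v | fibre_card D v == 0].
  rewrite inE -leqn0 leqNgt; apply/negP => /fibre_card_gt0P[k /fibre_card_C_le1_of_D].
  by rewrite leqNgt C2u.
have D0y : y \notin [set v | fibre_card D v == 0] by rewrite inE -lt0n.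
have [w [z [D0w D1z ewz]]] := connected_boundary_edge conn_e D0u D0y.
rewrite inE in D0w; rewrite inE -lt0n in D1z; move/eqP: D0w => D0w.
have S1z := fibre_card_S_gt0_boundary n_gt2 D0w ewz D1z.
have thin_z : z \notin thin by rewrite inE (negPf (lt0n_neq0 D1z)).
have S_thin v : v \in thin -> n - 1 <= fibre_card S v.
  by rewrite inE => /andP[/eqP D0v C1v]; move: (fibre_card_SCD v); rewrite D0v; lia.
have := sum_fibre_card_le S (z |: thin); rewrite big_setU1 //=.
have : \sum_(v in thin) (n - 1) <= \sum_(v in thin) fibre_card S v by exact: leq_sum.
rewrite sum_nat_const card_S mulnC; have := leq_mul thin_ge (leqnn (n - 1)); lia.
Qed.
End BigFibre.

Section SmallFibres.
Hypothesis C_le1 : forall u, fibre_card C u <= 1.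
Hypothesis D_le1 : forall u, fibre_card D u <= 1.

Definition mixed : {set T} := [set u | (0 < fibre_card C u) && (0 < fibre_card D u)].

Lemma fibre_card_S_mixed u : fibre_card S u + 2 = n + (u \notin mixed).
Proof.
move: (fibre_card_SCD u) (fibre_card_CD_gt0 u) (C_le1 u) (D_le1 u); rewrite inE.
move: (fibre_card S u) => k.
by case: (fibre_card C u) => [|[|//]]; case: (fibre_card D u) => [|[|//]] //= <-; rewrite -addnA.
Qed.

Lemma card_S_mixed : #|S| + 2 * #|T| = n * #|T| + #|~: mixed|.
Proof.
have -> : #|~: mixed| = \sum_u (u \notin mixed).
  rewrite -sum1_card big_mkcond /=; apply: eq_bigr => u _.
  by rewrite inE; case: (u \in mixed).
rewrite card_fibre_card_sum [2 * _]mulnC [n * _]mulnC -!sum_nat_const -!big_split /=.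
by apply: eq_bigr => u _; rewrite fibre_card_S_mixed.
Qed.

Lemma mixed_full_bipartite : (forall u, u \in mixed) -> bipartite e.
Proof.
move=> all_mixed.
have labels u : exists i j, (u, i) \in C /\ (u, j) \in D.
  by have /[!inE]/andP[/fibre_card_gt0P[i Ci] /fibre_card_gt0P[j Dj]] := all_mixed u; exists i, j.
pose X := [set u | [exists i : 'I_n, exists j : 'I_n, [&& i < j, (u, i) \in C & (u, j) \in D]]].
have memX (u : T) (i j : 'I_n) : (u, i) \in C -> (u, j) \in D -> (u \in X) = (i < j).
  move=> Ci Dj; rewrite inE; apply/existsP/idP => [[i' /existsP[j' /and3P[ij Ci' Dj']]]|ij].
    by rewrite (fibre_card_le1_eq (C_le1 u) Ci Ci') (fibre_card_le1_eq (D_le1 u) Dj Dj').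
  by exists i; apply/existsP; exists j; rewrite ij Ci Dj.
exists X => x y exy.
have [i [j [Ci Dj]]] := labels x; have [i' [j' [Ci' Dj']]] := labels y.
have eyx : e y x by rewrite e_sym.
rewrite (memX _ _ _ Ci Dj) (memX _ _ _ Ci' Dj').
rewrite -(cut_edge_label exy Ci Dj') (cut_edge_label eyx Ci' Dj).
case: ltngtP => // /val_inj ij; move: Dj; rewrite -ij.
by move/negPf: (C_notin_D Ci) => ->.
Qed.

Definition pattern a b : {set T} := [set u | ((u, a) \in C) && ((u, b) \in D)].

(* The non-mixed fibres that can be adjacent to a fibre of [pattern a b]. *)
Definition lone a b : {set T} := [set u in ~: mixed | ((u, b) \in C) || ((u, a) \in D)].

Lemma pattern_nbhd a b p :
  p \in pattern a b -> forall v, e p v -> v \in pattern b a :|: lone a b.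
Proof.
rewrite inE => /andP[Ca Db] v epv; have evp : e v p by rewrite e_sym.
case: (boolP (v \in mixed)) => [|nmv]; rewrite !inE.
  case/andP=> /fibre_card_gt0P[i Ci] /fibre_card_gt0P[j Dj].
  by rewrite (cut_edge_label epv Ca Dj) -(cut_edge_label evp Ci Db) Ci Dj.
rewrite inE in nmv; rewrite nmv /=; have [i /notin_S_CD/orP[Ci|Di]] := fibre_not_in_S v.
  by rewrite -(cut_edge_label evp Ci Db) Ci orbT.
by rewrite (cut_edge_label epv Ca Di) Di !orbT.
Qed.

Lemma card_patterns a b : #|pattern a b| + #|pattern b a| <= #|mixed|.
Proof.
rewrite -cardsUI; have -> : pattern a b :&: pattern b a = set0.
  apply/setP => u; rewrite !inE; case Ca: ((u, a) \in C) => //=.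
  by rewrite (negPf (C_notin_D Ca)) !andbF.
rewrite cards0 addn0 subset_leq_card //; apply/subsetP => u; rewrite !inE.
by case/orP=> /andP[Ci Dj]; apply/andP; split; apply/fibre_card_gt0P; eexists; eassumption.
Qed.

Lemma card_lones a b : a != b -> #|lone a b| + #|lone b a| <= #|~: mixed|.
Proof.
move=> ab; rewrite -cardsUI; have -> : lone a b :&: lone b a = set0.
  apply/setP => u; rewrite !inE; apply/negP => /andP[/andP[not_mixed bCaD] /andP[_ aCbD]].
  have not_both i j : (u, i) \in C -> (u, j) \in D -> False.
    move=> Ci Dj; case/negP: not_mixed.
    by apply/andP; split; apply/fibre_card_gt0P; [exists i | exists j].
  case/orP: bCaD => [Cb|Da]; case/orP: aCbD => [Ca|Db]; try exact: not_both Dj.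
  - by case/eqP: ab; apply: fibre_card_le1_eq (C_le1 u) Ca Cb.
  - exact: not_both Cb Db.
  - exact: not_both Ca Da.
  - by case/eqP: ab; apply: fibre_card_le1_eq (D_le1 u) Da Db.
rewrite cards0 addn0 subset_leq_card //; apply/subsetP => u.
by rewrite !inE => /orP[]/andP[->].
Qed.

Lemma mixed_degree_bound u :
  u \in mixed -> min_degree e <= #|~: mixed| \/ (min_degree e).*2 <= #|T|.
Proof.
rewrite inE => /andP[/fibre_card_gt0P[a Ca] /fibre_card_gt0P[b Db]].
have ab : a != b by apply: contraTneq Db => <-; exact: C_notin_D.
have pattern_deg a' b' p :
    p \in pattern a' b' -> min_degree e <= #|pattern b' a'| + #|lone a' b'|.
  move=> Pp; apply: leq_trans (min_degree_le_card (pattern_nbhd Pp)) _.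
  exact: leq_card_setU.
have Pu : u \in pattern a b by rewrite inE Ca Db.
have lones := card_lones ab; have := pattern_deg _ _ _ Pu.
have [-> | [q Pq]] := set_0Vmem (pattern b a); first by rewrite cards0 /=; left; lia.
have := pattern_deg _ _ _ Pq; have := card_patterns a b; have := cardsC mixed.
by right; lia.
Qed.

Lemma card_S_gt (x : T) :
  irreflexive e -> ~ bipartite e -> 2 < n -> (n - 1) * min_degree e < #|S|.
Proof.
move=> e_irr nbip n_gt2.
have [nm0 | [k nm_k]] := set_0Vmem (~: mixed).
  case: nbip; apply: mixed_full_bipartite => u.
  by rewrite -[u \in mixed]negbK -in_setC nm0 inE.
have nm_pos : 0 < #|~: mixed| by apply/card_gt0P; exists k.
have dT := min_degree_lt_card x e_irr.
have bound : min_degree e <= #|~: mixed| \/ (min_degree e).*2 <= #|T|.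
  have [-> | [u /mixed_degree_bound //]] := set_0Vmem mixed.
  by left; rewrite setC0 cardsT ltnW.
have := card_S_mixed; case: bound => bound.
- have := leq_mul (leqnn (n - 2)) dT; nia.
- have := leq_mul (leqnn (n - 2)) bound; nia.
Qed.
End SmallFibres.
End Cut.

Theorem mainTheorem4 (T : finType) (e : rel T) (n : nat) (S : {set T * 'I_n}) :
  simple_graph e ->
  graph_connected e ->
  ~ bipartite e ->
  vertex_connectivity e = min_degree e ->
  0 < min_degree e ->
  3 <= n ->
  #|S| = (n - 1) * min_degree e ->
  (forall u : T, fibre n u :\: S != set0) ->
  (forall x, x \notin S -> exists2 y, y \notin S & kron_Kn e x y) ->
  connectedb (kron_Kn e (n:=n)) (~: S).
Proof.
move=> [e_sym e_irr] conn_e nbip kappa_eq _ n_gt2 card_S fibre_S no_isolated.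
apply/idPn => /disconnected_split[C [D [CD_cover CD_disjoint [x0 Cx0] [y0 Dy0] no_CD_edge]]].
have fibre_not_in_S u : exists i, (u, i) \notin S.
  by have /set0Pn[[v i]] := fibre_S u; rewrite !inE => /andP[Si /eqP <-]; exists i.
have C_le1 := fibre_card_C_le1 e_sym CD_cover CD_disjoint no_CD_edge no_isolated
  fibre_not_in_S conn_e kappa_eq n_gt2 card_S (ex_intro _ y0 Dy0).
have no_DC_edge x y : x \in D -> y \in C -> ~~ kron_Kn e x y.
  by move=> Dx Cy; rewrite kron_Kn_sym //; apply: no_CD_edge.
have D_le1 := fibre_card_C_le1 e_sym (etrans (setUC D C) CD_cover)
  (etrans (disjoint_sym D C) CD_disjoint) no_DC_edge no_isolated fibre_not_in_S
  conn_e kappa_eq n_gt2 card_S (ex_intro _ x0 Cx0).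
have := card_S_gt e_sym CD_cover CD_disjoint no_CD_edge fibre_not_in_S C_le1 D_le1 x0.1.
by rewrite card_S ltnn => /(_ e_irr nbip n_gt2).
Qed.
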